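(* Let $\vec a=(a_1,\dots,a_n)\in\mathbb R^n_{>0}$, $\Sigma=\partial E(\vec a)$ and $Z=Z_{\vec a}:=2\pi\sum_{j=1}^n\frac1{a_j}(x_j\partial_{x_j}+y_j\partial_{y_j})$. Let $\alpha=\lambda_{std}|_\Sigma$ and let $\beta$ be the one-form on $\Sigma$ with $\ker\beta=T\Sigma\cap iT\Sigma$ and $\beta(iZ)=1$. Then there is a diffeomorphism $G:\partial E(\vec a)\to\partial E(\vec a)$ such that $G^*\alpha=\beta$.
   Context: $E(\vec a)=\{z\in\mathbb C^n:\pi\sum_j|z_j|^2/a_j\le1\}$, $z_j=x_j+iy_j$, $\lambda_{std}=\frac12\sum_j(x_jdy_j-y_jdx_j)$, and $i$ is the standard complex structure. *)

From HB Require Import structures.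
From mathcomp Require Import all_boot all_order all_algebra.
From mathcomp Require Import all_classical all_reals all_analysis.
Set Implicit Arguments. Unset Strict Implicit. Unset Printing Implicit Defensive.
Import Order.TTheory GRing.Theory Num.Theory.
Import numFieldNormedType.Exports.
Local Open Scope classical_set_scope.
Local Open Scope ring_scope.

(* C^n is modelled as R^n x R^n : z = (x, y),
   with z_j = x_j + i y_j, x_j = (z.1) 0 j, y_j = (z.2) 0 j. *)
Definition Cn (R : realType) (n : nat) := ('rV[R]_n * 'rV[R]_n)%type.

Section Defs.
Variables (R : realType) (n : nat).

Definition xc (p : Cn R n) (j : 'I_n) : R := p.1 0 j.
Definition yc (p : Cn R n) (j : 'I_n) : R := p.2 0 j.

Definition ellQ (a : 'I_n -> R) (p : Cn R n) : R :=
  pi * \sum_(j < n) (xc p j ^+ 2 + yc p j ^+ 2) / a j.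

Definition ellipsoid (a : 'I_n -> R) : set (Cn R n) := [set p | ellQ a p <= 1].

Definition ellBoundary (a : 'I_n -> R) : set (Cn R n) := [set p | ellQ a p = 1].

Definition tangentSigma (a : 'I_n -> R) (p v : Cn R n) : Prop :=
  derive (ellQ a) p v = 0.

Definition Jstd (v : Cn R n) : Cn R n := (- v.2, v.1).

Definition Zfield (a : 'I_n -> R) (p : Cn R n) : Cn R n :=
  (\row_j (2 * pi / a j * xc p j), \row_j (2 * pi / a j * yc p j)).

Definition lambda_std (p v : Cn R n) : R :=
  2^-1 * \sum_(j < n) (xc p j * yc v j - yc p j * xc v j).

Fixpoint Ck (k : nat) (f : Cn R n -> Cn R n) : Prop :=
  match k with
  | 0 => continuous f
  | k.+1 => (forall x v, derivable f x v) /\ forall v, Ck k (fun x => derive f x v)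
  end.

Definition smooth (f : Cn R n -> Cn R n) : Prop := forall k, Ck k f.

(* G (restricted to S) is a diffeomorphism S -> S, where S is a closed embedded
   submanifold: G and its inverse are restrictions of smooth maps of R^{2n}. *)
Definition diffeo_on (S : set (Cn R n)) (G : Cn R n -> Cn R n) : Prop :=
  smooth G /\ (forall p, S p -> S (G p)) /\
  exists H : Cn R n -> Cn R n, smooth H /\ (forall p, S p -> S (H p)) /\
    (forall p, S p -> H (G p) = p) /\ (forall p, S p -> G (H p) = p).

End Defs.

(* G rescales every coordinate, G(z)_j = s_j(z) z_j with s_j > 0.  For such maps the
   terms containing ds_j cancel, so G^*lambda = 1/2 sum_j s_j^2 (x_j dy_j - y_j dx_j).
   On the other hand beta is forced: for omega = sum_j (x_j dy_j - y_j dx_j) / a_j, the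
   kernel of omega on T Sigma is T Sigma cap i T Sigma, and omega(iZ) = 2 pi S on Sigma
   with S = sum_j |z_j|^2 / a_j^2, hence beta = omega / omega(iZ).  It thus suffices to
   take s_j^2 = 1 / (a_j P) with P smooth, positive and equal to pi S on Sigma, e.g.
   P = pi S + (1 - Q)^2.  Such a G maps Sigma to itself, and the same construction with
   every a_j in the weights replaced by 1 / a_j inverts it on Sigma. *)

From HB Require Import structures.
From mathcomp Require Import all_boot all_order all_algebra.
From mathcomp Require Import all_classical all_reals all_analysis.
From mathcomp Require Import ring.
Set Implicit Arguments.
Import Order.TTheory GRing.Theory Num.Theory.
Import numFieldNormedType.Exports.
Local Open Scope classical_set_scope.
Local Open Scope ring_scope.

Section SmoothClass.
Context {R : realType} {V W : normedModType R}.
Implicit Types (f g : V -> R) (x v : V).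

Lemma derive_linear {U : normedModType R} {l : V -> U} x v : linear l -> continuous l ->
  differentiable l x /\ 'D_v l x = l v.
Proof.
move=> llin lcont.
pose L : {linear V -> U} := HB.pack l (GRing.isLinear.Build _ _ _ _ _ llin).
have -> : l = L by [].
have dL : differentiable L x by exact: linear_differentiable.
by split=> //; rewrite deriveE // diff_lin.
Qed.

Lemma differentiable_sqrt {r : R} : 0 < r -> differentiable (@Num.sqrt R) r.
Proof. by move=> r0; apply/derivable1_diffP; case: (is_derive1_sqrt r0). Qed.

Lemma derive_sqrt_comp f x v : differentiable f x -> 0 < f x ->
  'D_v (fun y => Num.sqrt (f y)) x = 'D_v f x / (2 * Num.sqrt (f x)).
Proof.
move=> df fx0.
have dsqrt := differentiable_sqrt fx0.
rewrite (deriveE _ (differentiable_comp df dsqrt)) (diff_comp df dsqrt) /=.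
by rewrite diff1E // derive1E derive_sqrt // -deriveE.
Qed.

(* Closed under directional derivatives (smooth_scalar_derive), hence C^infinity. *)
Inductive smooth_scalar : (V -> R) -> Prop :=
| smooth_cst c : smooth_scalar (fun _ => c)
| smooth_linear l : linear l -> continuous l -> smooth_scalar l
| smooth_add f g : smooth_scalar f -> smooth_scalar g ->
    smooth_scalar (fun x => f x + g x)
| smooth_mul f g : smooth_scalar f -> smooth_scalar g ->
    smooth_scalar (fun x => f x * g x)
| smooth_sum m (F : 'I_m -> V -> R) : (forall i, smooth_scalar (F i)) ->
    smooth_scalar (fun x => \sum_(i < m) F i x)
| smooth_inv f : smooth_scalar f -> (forall x, f x != 0) ->
    smooth_scalar (fun x => (f x)^-1)
| smooth_sqrt f : smooth_scalar f -> (forall x, 0 < f x) ->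
    smooth_scalar (fun x => Num.sqrt (f x)).

Lemma smooth_scalar_ext {f g} : f =1 g -> smooth_scalar f -> smooth_scalar g.
Proof. by move=> /funext ->. Qed.

Lemma smooth_scalar_derive f : smooth_scalar f ->
  (forall x, differentiable f x) /\ forall v, smooth_scalar (fun x => 'D_v f x).
Proof.
elim=> {f} [c|l llin lcont|f g _ [df Df] _ [dg Dg]|f g sf [df Df] sg [dg Dg]
  |m F _ IH|f sf [df Df] f0|f sf [df Df] f0]; split=> [x|v].
- exact: differentiable_cst.
- by apply: (smooth_scalar_ext _ (smooth_cst 0)) => x; rewrite derive_cst.
- exact: (derive_linear x x llin lcont).1.
- apply: (smooth_scalar_ext _ (smooth_cst (l v))) => x.
  by rewrite (derive_linear x v llin lcont).2.
- exact: differentiableD.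
- apply: (smooth_scalar_ext _ (smooth_add (Df v) (Dg v))) => x.
  by rewrite -deriveD //; apply: diff_derivable.
- exact: differentiableM.
- apply: (smooth_scalar_ext _
    (smooth_add (smooth_mul sf (Dg v)) (smooth_mul sg (Df v)))) => x.
  by rewrite -deriveM //; apply: diff_derivable.
- rewrite (_ : (fun _ => _) = \sum_(i < m) F i); last first.
    by apply/funext => y; rewrite fct_sumE.
  by apply: differentiable_sum => i; exact: (IH i).1.
- apply: (smooth_scalar_ext _ (smooth_sum _ (fun i => (IH i).2 v))) => x.
  rewrite (_ : (fun _ => _) = \sum_(i < m) F i); last first.
    by apply/funext => y; rewrite fct_sumE.
  by rewrite derive_sum // => i; apply/diff_derivable/(IH i).1.
- exact: differentiableV.
- have sfV : smooth_scalar (fun x => (f x)^-1) by exact: smooth_inv.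
  apply: (smooth_scalar_ext _ (smooth_mul (smooth_cst (- 1))
    (smooth_mul sfV (smooth_mul sfV (Df v))))) => x.
  rewrite deriveV //; last exact: diff_derivable.
  by move: (f x) ('D_v f x) => r d; rewrite -exprVn expr2 mulN1r mulrA scaleNr.
- by apply: (@differentiable_comp _ _ _ _ f Num.sqrt) => //; exact: differentiable_sqrt.
- have sfS : smooth_scalar (fun x => Num.sqrt (f x)) by exact: smooth_sqrt.
  have sfSV : smooth_scalar (fun x => (Num.sqrt (f x))^-1).
    by apply: smooth_inv => // x; rewrite gt_eqF // sqrtr_gt0.
  apply: (smooth_scalar_ext _ (smooth_mul (Df v) (smooth_mul (smooth_cst 2^-1) sfSV))) => x.
  by rewrite derive_sqrt_comp // invfM.
Qed.

Lemma smooth_scalar_derivable f x v : smooth_scalar f -> derivable f x v.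
Proof. by move=> /smooth_scalar_derive[df _]; exact: diff_derivable. Qed.

Lemma derive_linear_comp {U : normedModType R} {l : V -> W} {F : U -> V} (x v : U) :
  linear l -> continuous l -> differentiable F x ->
  l ('D_v F x) = 'D_v (l \o F) x.
Proof.
move=> llin lcont dF; have [dl _] := derive_linear (F x) (F x) llin lcont.
rewrite (deriveE _ (differentiable_comp dF dl)) (diff_comp dF dl) /=.
by rewrite -(deriveE _ dl) (derive_linear _ _ llin lcont).2 deriveE.
Qed.

Inductive smooth_map : (V -> W) -> Prop :=
| smooth_scale f c : smooth_scalar f -> smooth_map (fun x => f x *: c)
| smooth_map_add F G : smooth_map F -> smooth_map G -> smooth_map (F \+ G)
| smooth_map_sum m (F : 'I_m -> V -> W) : (forall i, smooth_map (F i)) ->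
    smooth_map (\sum_(i < m) F i).

Lemma smooth_map_ext {F G : V -> W} : F =1 G -> smooth_map F -> smooth_map G.
Proof. by move=> /funext ->. Qed.

Lemma smooth_map_derive F : smooth_map F ->
  (forall x, differentiable F x) /\ forall v, smooth_map (fun x => 'D_v F x).
Proof.
elim=> {F} [f c /[dup] sf /smooth_scalar_derive[df Df]|F G _ [dF DF] _ [dG DG]
  |m F _ IH]; split=> [x|v].
- exact: differentiableZl.
- apply: (smooth_map_ext _ (smooth_scale c (Df v))) => x.
  rewrite [RHS]deriveE; last exact: differentiableZl.
  by rewrite diffZl // -deriveE.
- exact: differentiableD.
- apply: (smooth_map_ext _ (smooth_map_add (DF v) (DG v))) => x.
  by rewrite deriveD //; apply: diff_derivable.
- by apply: differentiable_sum => i; exact: (IH i).1.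
- apply: (smooth_map_ext _ (smooth_map_sum _ (fun i => (IH i).2 v))) => x.
  by rewrite derive_sum ?fct_sumE // => i; apply/diff_derivable/(IH i).1.
Qed.
End SmoothClass.

Lemma smooth_map_smooth (R : realType) n (F : Cn R n -> Cn R n) :
  smooth_map F -> smooth F.
Proof.
move=> sF k; elim: k F sF => [|k IH] F /smooth_map_derive[dF DF] /=.
  by move=> x; exact: differentiable_continuous.
by split=> [x v|v]; [exact: diff_derivable | exact: IH].
Qed.

Section Coordinates.
Context {R : realType} {n : nat}.
Implicit Types (p v : Cn R n).

Lemma xc_linear j : linear (fun p : Cn R n => xc p j).
Proof. by move=> c u v; rewrite /xc /= !mxE. Qed.

Lemma yc_linear j : linear (fun p : Cn R n => yc p j).
Proof. by move=> c u v; rewrite /yc /= !mxE. Qed.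

Lemma xc_continuous j : continuous (fun p : Cn R n => xc p j).
Proof.
move=> p; apply: (@continuous_comp _ _ _ fst (fun M : 'rV[R]_n => M 0 j)).
  exact: cvg_fst.
exact: coord_continuous.
Qed.

Lemma yc_continuous j : continuous (fun p : Cn R n => yc p j).
Proof.
move=> p; apply: (@continuous_comp _ _ _ snd (fun M : 'rV[R]_n => M 0 j)).
  exact: cvg_snd.
exact: coord_continuous.
Qed.

Lemma smooth_xc j : smooth_scalar (fun p : Cn R n => xc p j).
Proof. exact: smooth_linear (xc_linear j) (xc_continuous j). Qed.

Lemma smooth_yc j : smooth_scalar (fun p : Cn R n => yc p j).
Proof. exact: smooth_linear (yc_linear j) (yc_continuous j). Qed.

Lemma derive_xc j p v : 'D_v (fun q => xc q j) p = xc v j.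
Proof. exact: (derive_linear p v (xc_linear j) (xc_continuous j)).2. Qed.

Lemma derive_yc j p v : 'D_v (fun q => yc q j) p = yc v j.
Proof. exact: (derive_linear p v (yc_linear j) (yc_continuous j)).2. Qed.

Lemma Cn_ext p q : (forall j, xc p j = xc q j) -> (forall j, yc p j = yc q j) -> p = q.
Proof.
by case: p q => [p1 p2] [q1 q2] hx hy; congr pair; apply/rowP => j; [exact: hx|exact: hy].
Qed.

Lemma Jstd_lin c u v : Jstd (c *: u + v) = c *: Jstd u + Jstd v.
Proof. by apply: Cn_ext => j; rewrite /xc /yc /= !mxE // mulrN opprD. Qed.

Definition scale_coords (s : 'I_n -> Cn R n -> R) p : Cn R n :=
  (\row_j (s j p * xc p j), \row_j (s j p * yc p j)).

Lemma xc_scale_coords s p j : xc (scale_coords s p) j = s j p * xc p j.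
Proof. by rewrite /xc mxE. Qed.

Lemma yc_scale_coords s p j : yc (scale_coords s p) j = s j p * yc p j.
Proof. by rewrite /yc mxE. Qed.

Lemma scale_coordsE s : scale_coords s = \sum_(j < n)
  ((fun p => (s j p * xc p j) *: (delta_mx 0 j, 0)) \+
   (fun p => (s j p * yc p j) *: (0, delta_mx 0 j))).
Proof.
have fst_sum m (F : 'I_m -> Cn R n) : (\sum_(i < m) F i).1 = \sum_(i < m) (F i).1.
  exact: (big_morph fst (fun _ _ => erefl) erefl).
have snd_sum m (F : 'I_m -> Cn R n) : (\sum_(i < m) F i).2 = \sum_(i < m) (F i).2.
  exact: (big_morph snd (fun _ _ => erefl) erefl).
apply/funext => p; apply: Cn_ext => k;
  rewrite fct_sumE /xc /yc ?fst_sum ?snd_sum summxE (bigD1 k) //= big1 => [|i /negbTE ik];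
  by rewrite !mxE ?eqxx /xc /yc /= 1?(eq_sym k) ?ik ?mulr0 ?mulr1 ?addr0 ?add0r.
Qed.

Lemma smooth_scale_coords s : (forall j, smooth_scalar (s j)) ->
  smooth_map (scale_coords s).
Proof.
move=> ss; rewrite scale_coordsE; apply: smooth_map_sum => j.
by apply: smooth_map_add; apply: smooth_scale; apply: smooth_mul;
  first [exact: ss | exact: smooth_xc | exact: smooth_yc].
Qed.

Lemma xc_derive_scale_coords s p v j : (forall i, smooth_scalar (s i)) ->
  xc ('D_v (scale_coords s) p) j = s j p * xc v j + xc p j * 'D_v (s j) p.
Proof.
move=> ss; have [dS _] := smooth_map_derive (smooth_scale_coords _ ss).
rewrite (derive_linear_comp _ (xc_linear j) (xc_continuous j) (dS p)).
have -> : (fun q => xc q j) \o scale_coords s = s j * (fun q => xc q j).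
  by apply/funext => q; rewrite /= xc_scale_coords.
rewrite deriveM ?derive_xc //; apply: smooth_scalar_derivable; [exact: ss|exact: smooth_xc].
Qed.

Lemma yc_derive_scale_coords s p v j : (forall i, smooth_scalar (s i)) ->
  yc ('D_v (scale_coords s) p) j = s j p * yc v j + yc p j * 'D_v (s j) p.
Proof.
move=> ss; have [dS _] := smooth_map_derive (smooth_scale_coords _ ss).
rewrite (derive_linear_comp _ (yc_linear j) (yc_continuous j) (dS p)).
have -> : (fun q => yc q j) \o scale_coords s = s j * (fun q => yc q j).
  by apply/funext => q; rewrite /= yc_scale_coords.
rewrite deriveM ?derive_yc //; apply: smooth_scalar_derivable; [exact: ss|exact: smooth_yc].
Qed.

Lemma lambda_std_scale_coords s p v : (forall j, smooth_scalar (s j)) ->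
  lambda_std (scale_coords s p) ('D_v (scale_coords s) p) =
  2^-1 * \sum_(j < n) s j p ^+ 2 * (xc p j * yc v j - yc p j * xc v j).
Proof.
move=> ss; congr (_ * _); apply: eq_bigr => j _.
rewrite xc_scale_coords yc_scale_coords xc_derive_scale_coords //.
rewrite yc_derive_scale_coords //; ring.
Qed.
End Coordinates.

Section Ellipsoid.
Context {R : realType} {n : nat}.
Variable a : 'I_n -> R.
Hypothesis a_gt0 : forall j, 0 < a j.
Implicit Types (p v w : Cn R n) (d : 'I_n -> R).

Definition normz2 p j := xc p j ^+ 2 + yc p j ^+ 2.

Lemma ellQE p : ellQ a p = pi * \sum_(j < n) normz2 p j / a j.
Proof. by []. Qed.

Lemma normz2_ge0 p j : 0 <= normz2 p j.
Proof. by rewrite addr_ge0 ?sqr_ge0. Qed.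

Lemma smooth_normz2 j : smooth_scalar (fun p => normz2 p j).
Proof.
apply: (smooth_scalar_ext _ (smooth_add (smooth_mul (smooth_xc j) (smooth_xc j))
  (smooth_mul (smooth_yc j) (smooth_yc j)))) => p.
by rewrite /normz2 !expr2.
Qed.

Lemma smooth_ellQ : smooth_scalar (ellQ a).
Proof.
apply: (smooth_mul (smooth_cst pi)).
by apply: (smooth_sum _ (fun j => smooth_mul (smooth_normz2 j) (smooth_cst _))).
Qed.

Lemma derive_normz2 j p w :
  'D_w (fun q => normz2 q j) p = 2 * (xc p j * xc w j + yc p j * yc w j).
Proof.
rewrite (_ : (fun q => normz2 q j) = (fun q => xc q j) * (fun q => xc q j) +
  (fun q => yc q j) * (fun q => yc q j)); last by apply/funext => q; rewrite /normz2 !expr2.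
rewrite deriveD ?deriveM ?derive_xc ?derive_yc /GRing.scale /=; first ring.
all: apply: smooth_scalar_derivable; try apply: smooth_mul;
  first [exact: smooth_xc | exact: smooth_yc].
Qed.

Lemma derive_ellQ p w :
  'D_w (ellQ a) p = 2 * pi * \sum_(j < n) (xc p j * xc w j + yc p j * yc w j) / a j.
Proof.
rewrite (_ : ellQ a = pi *: \sum_(j < n) (a j)^-1 *: (fun q => normz2 q j)); last first.
  apply/funext => q; rewrite ellQE /= fct_sumE; congr (_ * _).
  by apply: eq_bigr => j _; rewrite mulrC.
have dN j : derivable (fun q => normz2 q j) p w.
  exact: smooth_scalar_derivable (smooth_normz2 j).
rewrite deriveZ ?derive_sum => [|j|]; last 2 first.
- exact: derivableZ.
- by apply: derivable_sum => j; exact: derivableZ.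
rewrite /GRing.scale /= !mulr_sumr; apply: eq_bigr => j _.
by rewrite deriveZ ?derive_normz2 // /GRing.scale /=; ring.
Qed.

Section Rescaling.
Variable d : 'I_n -> R.
Hypothesis d_gt0 : forall j, 0 < d j.

(* The term (1 - Q)^2 vanishes on Sigma and keeps the weight positive at z = 0. *)
Definition ellWeight p :=
  pi * \sum_(j < n) normz2 p j / (a j * d j) + (1 - ellQ a p) ^+ 2.

Definition ellScale j p := (Num.sqrt (d j * ellWeight p))^-1.

Definition ellMap := scale_coords ellScale.

Lemma ellWeight_gt0 p : 0 < ellWeight p.
Proof.
have ad_gt0 j : 0 < a j * d j by rewrite mulr_gt0.
have terms_ge0 j : xpredT j -> 0 <= normz2 p j / (a j * d j).
  by rewrite divr_ge0 ?normz2_ge0 ?ltW.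
have [S_gt0|] := ltrP 0 (\sum_(j < n) normz2 p j / (a j * d j)).
  by rewrite ltr_wpDr ?sqr_ge0 // mulr_gt0 ?pi_gt0.
rewrite le_eqVlt ltNge sumr_ge0 // orbF => /eqP S0.
have normz2_0 j : normz2 p j = 0.
  have /eqP := psumr_eq0P terms_ge0 S0 (isT : xpredT j).
  by rewrite mulf_eq0 invr_eq0 (gt_eqF (ad_gt0 j)) orbF => /eqP.
rewrite /ellWeight S0 ellQE big1 => [|j _]; last by rewrite normz2_0 mul0r.
by rewrite !mulr0 subr0 add0r expr1n.
Qed.

Lemma ellWeight_boundary p : ellQ a p = 1 ->
  ellWeight p = pi * \sum_(j < n) normz2 p j / (a j * d j).
Proof. by rewrite /ellWeight => ->; rewrite subrr expr0n addr0. Qed.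

Lemma smooth_ellWeight : smooth_scalar ellWeight.
Proof.
apply: smooth_add.
  apply: (smooth_mul (smooth_cst pi)).
  exact: (smooth_sum _ (fun j => smooth_mul (smooth_normz2 j) (smooth_cst _))).
apply: (smooth_scalar_ext _ (smooth_mul (smooth_add (smooth_cst 1)
  (smooth_mul (smooth_cst (-1)) smooth_ellQ)) (smooth_add (smooth_cst 1)
  (smooth_mul (smooth_cst (-1)) smooth_ellQ)))) => p.
by rewrite expr2 mulN1r.
Qed.

Lemma smooth_ellScale j : smooth_scalar (ellScale j).
Proof.
have dW_gt0 p : 0 < d j * ellWeight p by rewrite mulr_gt0 ?ellWeight_gt0.
apply: smooth_inv => [|p]; last by rewrite gt_eqF // sqrtr_gt0.
apply: smooth_sqrt dW_gt0.
exact: smooth_mul (smooth_cst _) smooth_ellWeight.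
Qed.

Lemma smooth_ellMap : smooth_map ellMap.
Proof. exact: smooth_scale_coords smooth_ellScale. Qed.

Lemma ellScale_sqr j p : ellScale j p ^+ 2 = (d j * ellWeight p)^-1.
Proof. by rewrite exprVn sqr_sqrtr // ltW // mulr_gt0 ?ellWeight_gt0. Qed.

Lemma normz2_ellMap p j : normz2 (ellMap p) j = normz2 p j / (d j * ellWeight p).
Proof.
by rewrite /normz2 xc_scale_coords yc_scale_coords !exprMn -mulrDr ellScale_sqr mulrC.
Qed.

Lemma ellMap_boundary p : ellQ a p = 1 -> ellQ a (ellMap p) = 1.
Proof.
move=> Q1; have W_neq0 : ellWeight p != 0 by rewrite gt_eqF ?ellWeight_gt0.
have -> : ellQ a (ellMap p) =
    (pi * \sum_(j < n) normz2 p j / (a j * d j)) / ellWeight p.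
  rewrite ellQE -mulrA mulr_suml; congr (_ * _); apply: eq_bigr => j _.
  rewrite normz2_ellMap; field.
  by rewrite W_neq0 (gt_eqF (a_gt0 j)) (gt_eqF (d_gt0 j)).
by rewrite -ellWeight_boundary // mulfV.
Qed.

End Rescaling.

Lemma ellWeight_ellMap d p : (forall j, 0 < d j) -> ellQ a p = 1 ->
  ellWeight (fun j => (d j)^-1) (ellMap d p) = (ellWeight d p)^-1.
Proof.
move=> d_gt0 Q1; have W_neq0 : ellWeight d p != 0 by rewrite gt_eqF ?ellWeight_gt0.
rewrite ellWeight_boundary ?ellMap_boundary // -[RHS]mul1r -{1}Q1 ellQE.
rewrite -mulrA mulr_suml; congr (_ * _); apply: eq_bigr => j _.
rewrite normz2_ellMap //; field.
by rewrite W_neq0 (gt_eqF (a_gt0 j)) (gt_eqF (d_gt0 j)).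
Qed.

Lemma ellMapK d p : (forall j, 0 < d j) -> ellQ a p = 1 ->
  ellMap (fun j => (d j)^-1) (ellMap d p) = p.
Proof.
move=> d_gt0 Q1; have W_gt0 := ellWeight_gt0 _ d_gt0 p.
have scaleK j : ellScale (fun j => (d j)^-1) j (ellMap d p) * ellScale d j p = 1.
  rewrite /ellScale ellWeight_ellMap // -invfM -sqrtrM; last first.
    by rewrite ltW // mulr_gt0 ?invr_gt0.
  rewrite (_ : _ * _ = 1) ?sqrtr1 ?invr1 //; field.
  by rewrite (gt_eqF W_gt0) (gt_eqF (d_gt0 j)).
by apply: Cn_ext => j;
  rewrite /ellMap !(xc_scale_coords, yc_scale_coords) mulrA scaleK mul1r.
Qed.

Lemma ellMap_diffeo : diffeo_on (ellBoundary a) (ellMap a).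
Proof.
have aV_gt0 j : 0 < (a j)^-1 by rewrite invr_gt0.
have aVV : (fun j => ((a j)^-1)^-1) = a by apply/funext => j; rewrite invrK.
split; first exact/smooth_map_smooth/smooth_ellMap.
split; first by move=> p; exact: ellMap_boundary.
exists (ellMap (fun j => (a j)^-1)); split; first exact/smooth_map_smooth/smooth_ellMap.
split; first by move=> p; exact: ellMap_boundary.
split; first by move=> p; exact: ellMapK.
by move=> p Sp; rewrite -{1}aVV ellMapK.
Qed.

Definition omega p v := \sum_(j < n) (xc p j * yc v j - yc p j * xc v j) / a j.

Lemma omega_lin p c u v : omega p (c *: u + v) = c * omega p u + omega p v.
Proof.
rewrite /omega mulr_sumr -big_split /=; apply: eq_bigr => j _.
by rewrite /xc /yc !mxE; ring.
Qed.

Lemma lambda_std_ellMap p v :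
  lambda_std (ellMap a p) ('D_v (ellMap a) p) = omega p v / (2 * ellWeight a p).
Proof.
rewrite lambda_std_scale_coords; last exact: smooth_ellScale.
rewrite /omega mulr_suml mulr_sumr; apply: eq_bigr => j _.
rewrite ellScale_sqr //; field.
by rewrite (gt_eqF (ellWeight_gt0 _ a_gt0 p)) (gt_eqF (a_gt0 j)).
Qed.

Lemma tangentSigma_omega p w : tangentSigma a p w <-> omega p (Jstd w) = 0.
Proof.
rewrite /tangentSigma derive_ellQ (_ : \sum_(j < n) _ = omega p (Jstd w)).
  have pi2_neq0 : 2 * pi != 0 :> R by rewrite mulf_neq0 ?pnatr_eq0 ?gt_eqF ?pi_gt0.
  split=> [/eqP|->]; last by rewrite mulr0.
  by rewrite mulf_eq0 (negbTE pi2_neq0) => /eqP.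
by apply: eq_bigr => j _; rewrite /Jstd /xc /yc /= mxE; ring.
Qed.

Lemma Jstd_tangentP p v :
  (exists w, tangentSigma a p w /\ v = Jstd w) <-> omega p v = 0.
Proof.
split=> [[w [/tangentSigma_omega Tw ->]] // | omega0].
exists (v.2, - v.1); split; last by rewrite /Jstd /= opprK; case: v {omega0}.
by apply/tangentSigma_omega; rewrite /Jstd /= opprK; case: v omega0.
Qed.

Lemma tangentSigma_lin p c u v : tangentSigma a p u -> tangentSigma a p v ->
  tangentSigma a p (c *: u + v).
Proof. by rewrite !tangentSigma_omega Jstd_lin omega_lin => -> ->; rewrite mulr0 addr0. Qed.

Lemma tangent_Jstd_Zfield p : tangentSigma a p (Jstd (Zfield a p)).
Proof.
apply/tangentSigma_omega; rewrite /omega big1 // => j _.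
by rewrite /Jstd /Zfield /xc /yc /= !mxE; ring.
Qed.

Lemma omega_Jstd_Zfield p : ellQ a p = 1 -> omega p (Jstd (Zfield a p)) = 2 * ellWeight a p.
Proof.
move=> Q1; rewrite ellWeight_boundary // /omega mulrA mulr_sumr.
apply: eq_bigr => j _; rewrite /Jstd /Zfield /normz2 /xc /yc /= !mxE; field.
by rewrite (gt_eqF (a_gt0 j)).
Qed.

Section ContactForm.
Variable beta : Cn R n -> Cn R n -> R.
Hypothesis beta_lin : forall p, ellBoundary a p -> forall (c : R) u v,
  tangentSigma a p u -> tangentSigma a p v -> beta p (c *: u + v) = c * beta p u + beta p v.
Hypothesis beta_ker : forall p, ellBoundary a p -> forall v, tangentSigma a p v ->
  (beta p v = 0 <-> exists w, tangentSigma a p w /\ v = Jstd w).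
Hypothesis beta_iZ : forall p, ellBoundary a p -> beta p (Jstd (Zfield a p)) = 1.

Lemma beta_omega p v : ellBoundary a p -> tangentSigma a p v ->
  beta p v = omega p v / omega p (Jstd (Zfield a p)).
Proof.
move=> Sp Tv; set JZ := Jstd (Zfield a p); set t := omega p v / omega p JZ.
have JZ_neq0 : omega p JZ != 0.
  by rewrite omega_Jstd_Zfield // mulf_neq0 ?pnatr_eq0 // gt_eqF ?ellWeight_gt0.
have TJZ : tangentSigma a p JZ by exact: tangent_Jstd_Zfield.
have Tu : tangentSigma a p ((- t) *: JZ + v) by exact: tangentSigma_lin.
have : beta p ((- t) *: JZ + v) = 0.
  by apply/beta_ker/Jstd_tangentP => //; rewrite omega_lin /t mulNr divfK // addNr.
by rewrite beta_lin // beta_iZ // mulr1 addrC => /eqP; rewrite subr_eq0 => /eqP.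
Qed.
End ContactForm.
End Ellipsoid.

Theorem mainTheorem8 (R : realType) (n : nat) (a : 'I_n -> R)
  (beta : Cn R n -> Cn R n -> R) :
  (forall j, 0 < a j) ->
  (* beta is a one-form on Sigma: linear on each tangent space *)
  (forall p, ellBoundary a p -> forall (c : R) u v,
     tangentSigma a p u -> tangentSigma a p v ->
     beta p (c *: u + v) = c * beta p u + beta p v) ->
  (* ker beta = T Sigma  cap  i T Sigma *)
  (forall p, ellBoundary a p -> forall v, tangentSigma a p v ->
     (beta p v = 0 <->
      exists w, tangentSigma a p w /\ v = Jstd w)) ->
  (* beta(iZ) = 1 *)
  (forall p, ellBoundary a p -> beta p (Jstd (Zfield a p)) = 1) ->
  exists G : Cn R n -> Cn R n,
    diffeo_on (ellBoundary a) G /\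
    (* G^* alpha = beta, alpha = lambda_std restricted to Sigma *)
    forall p, ellBoundary a p -> forall v, tangentSigma a p v ->
      lambda_std (G p) (derive G p v) = beta p v.
Proof.
move=> a_gt0 beta_lin beta_ker beta_iZ.
exists (ellMap a a); split; first exact: ellMap_diffeo.
move=> p Sp v Tv.
rewrite lambda_std_ellMap // (beta_omega a_gt0 _ beta_lin beta_ker beta_iZ) //.
by rewrite omega_Jstd_Zfield.
Qed.
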